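(* Let $\mathcal H$ be a real Hilbert space. Let $\Psi: \mathcal H \to \mathbb R \cup \{+\infty\}$ be proper, lower-semicontinuous and convex, and let $\Phi: \mathcal H \to \mathbb R$ be convex and continuously differentiable with $L$-Lipschitz continuous gradient; set $\Theta=\Psi+\Phi$ and suppose $\operatorname{argmin}\Theta\neq\emptyset$. Let $\alpha>3$ and $0<s<\frac1L$, and let $(x_k)$ be generated by: given arbitrary $x_0,x_1\in\mathcal H$, for $k\ge1$, $$y_k = x_k + \frac{k-1}{k+\alpha-1}(x_k-x_{k-1}),\qquad x_{k+1} = \operatorname{prox}_{s\Psi}\big(y_k - s\nabla\Phi(y_k)\big).$$ Let $x^*\in\operatorname{argmin}\Theta$, and for $k\ge1$ define $z_k = x_k + \frac{k-1}{\alpha-1}(x_k-x_{k-1})$ and $$\mathcal E(k) = \frac{2s}{\alpha-1}(k+\alpha-2)^2\big(\Theta(x_k)-\Theta(x^* )\big) + (\alpha-1)\|z_k-x^*\|^2.$$ Then $$\sum_{k=1}^\infty k\big(\Theta(x_k)-\Theta(x^* )\big) \le \frac{(\alpha-1)\mathcal E(1)}{2s(\alpha-3)}.$$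
   Context: $\operatorname{prox}_{s\Psi}(z) = \operatorname{argmin}_{u\in\mathcal H}\{\Psi(u) + \frac{1}{2s}\|u-z\|^2\}$ denotes the proximal operator. *)

From HB Require Import structures.
From mathcomp Require Import all_boot all_order all_algebra.
From mathcomp Require Import all_classical all_reals all_analysis.
Set Implicit Arguments. Unset Strict Implicit. Unset Printing Implicit Defensive.
Import Order.TTheory GRing.Theory Num.Theory.
Import numFieldNormedType.Exports.
Local Open Scope ring_scope.
Local Open Scope classical_set_scope.

(* A real Hilbert space is modelled as a complete normed space V over R
   together with an inner product ip inducing the norm. *)
Definition is_inner_product {R : realType} {V : normedModType R}
  (ip : V -> V -> R) : Prop :=
  [/\ (forall x y, ip x y = ip y x),
      (forall (a : R) x y z, ip (a *: x + y) z = a * ip x z + ip y z)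
    & (forall x, ip x x = `|x| ^+ 2)].

Definition proper_fun {R : realType} {V : Type} (f : V -> \bar R) : Prop :=
  (forall x, f x != -oo%E) /\ (exists x, f x != +oo%E).

Definition convex_ext {R : realType} {V : lmodType R} (f : V -> \bar R) : Prop :=
  forall (x y : V) (t : R), 0 < t < 1 ->
    (f (t *: x + (1 - t) *: y)%R <= t%:E * f x + (1 - t)%:E * f y)%E.

Definition convex_real {R : realType} {V : lmodType R} (f : V -> R) : Prop :=
  forall (x y : V) (t : R), 0 <= t <= 1 ->
    f (t *: x + (1 - t) *: y) <= t * f x + (1 - t) * f y.

Definition is_gradient {R : realType} {V : normedModType R}
  (ip : V -> V -> R) (f : V -> R) (g : V -> V) : Prop :=
  forall x, differentiable f x /\ (forall h, 'd f x h = ip (g x) h).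

Definition is_argmin {R : realType} {V : Type} (f : V -> \bar R) (p : V) : Prop :=
  forall u, (f p <= f u)%E.

Definition is_prox {R : realType} {V : normedModType R}
  (s : R) (Psi : V -> \bar R) (z p : V) : Prop :=
  is_argmin (fun u => (Psi u + ((2 * s)^-1 * `|u - z| ^+ 2)%:E)%E) p.

From HB Require Import structures.
From mathcomp Require Import all_boot all_order all_algebra.
From mathcomp Require Import all_classical all_reals all_analysis.
From mathcomp Require Import lra ring.
Set Implicit Arguments. Unset Strict Implicit.
Import Order.TTheory GRing.Theory Num.Theory.
Import numFieldNormedType.Exports.
Local Open Scope ring_scope.
Local Open Scope classical_set_scope.

(* For k >= 1 the prox step yields the forward-backward inequality: for every u
   with Psi u finite,
     Theta x_{k+1} + <y_k - x_{k+1}, u - x_{k+1}> / s - |x_{k+1} - y_k|^2 / (2s)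
       <= Theta u,
   from the variational characterisation of the prox and the descent lemma
   (this is where s L < 1 is used).  Its convex combination at u = x_k and
   u = xstar with weights 1 - lam_k and lam_k = (alpha - 1) / (k + alpha - 1) is the
   energy decrease
     E(k+1) + 2s (alpha - 3) / (alpha - 1) * k (Theta x_k - Theta xstar) <= E(k),
   which telescopes to the bound.  If Psi x_1 = +oo, then E(1) = +oo. *)

Section InnerProduct.
Context {R : realType} {V : normedModType R} (ip : V -> V -> R).
Hypothesis ip_inner : is_inner_product ip.

Lemma ipC x y : ip x y = ip y x. Proof. by case: ip_inner. Qed.

Lemma ip_self x : ip x x = `|x| ^+ 2. Proof. by case: ip_inner. Qed.

Lemma ipDl x y z : ip (x + y) z = ip x z + ip y z.
Proof. by case: ip_inner => _ lin _; have := lin 1 x y z; rewrite scale1r mul1r. Qed.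

Lemma ip0l z : ip 0 z = 0.
Proof. by have := ipDl 0 0 z; rewrite addr0; lra. Qed.

Lemma ipZl a x z : ip (a *: x) z = a * ip x z.
Proof.
by case: ip_inner => _ lin _; have := lin a x 0 z; rewrite !addr0 ip0l addr0.
Qed.

Lemma ipNl x z : ip (- x) z = - ip x z.
Proof. by rewrite -scaleN1r ipZl mulN1r. Qed.

Lemma ipBl x y z : ip (x - y) z = ip x z - ip y z.
Proof. by rewrite ipDl ipNl. Qed.

Lemma ipDr x y z : ip z (x + y) = ip z x + ip z y.
Proof. by rewrite ipC ipDl !(ipC _ z). Qed.

Lemma ipZr a x z : ip z (a *: x) = a * ip z x.
Proof. by rewrite ipC ipZl ipC. Qed.

Lemma ipNr x z : ip z (- x) = - ip z x.
Proof. by rewrite ipC ipNl ipC. Qed.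

Lemma ipBr x y z : ip z (x - y) = ip z x - ip z y.
Proof. by rewrite ipDr ipNr. Qed.

Lemma ip0r z : ip z 0 = 0.
Proof. by rewrite ipC ip0l. Qed.

Definition ip_linE := (ipDl, ipDr, ipNl, ipNr, ipZl, ipZr).

Lemma sqr_normD u v : `|u + v| ^+ 2 = `|u| ^+ 2 + 2 * ip u v + `|v| ^+ 2.
Proof. rewrite -!ip_self ipDl !ipDr (ipC v u); ring. Qed.

Lemma sqr_normB u v : `|u - v| ^+ 2 = `|u| ^+ 2 - 2 * ip u v + `|v| ^+ 2.
Proof. rewrite sqr_normD ipNr normrN; ring. Qed.

Lemma sqr_normZ (a : R) (u : V) : `|a *: u| ^+ 2 = a ^+ 2 * `|u| ^+ 2.
Proof. by rewrite normrZ exprMn real_normK ?num_real. Qed.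

Lemma cauchy_schwarz a b : ip a b <= `|a| * `|b|.
Proof.
have [->|b0] := eqVneq b 0; first by rewrite ip0r normr0 mulr0.
have [->|a0] := eqVneq a 0; first by rewrite ip0l normr0 mul0r.
have nb : 0 < `|b| by rewrite normr_gt0.
have na : 0 < `|a| by rewrite normr_gt0.
set c := `|a| / `|b|.
have c_gt0 : 0 < c by rewrite divr_gt0.
have cb : c * `|b| = `|a| by rewrite /c divfK // gt_eqF.
have := sqr_ge0 `|a - c *: b|.
rewrite sqr_normB sqr_normZ ipZr -exprMn cb => sq_ge0.
rewrite -(ler_pM2l c_gt0) mulrCA cb -expr2; lra.
Qed.

Lemma convex_first_order_le (Phi : V -> R) (g : V -> V) :
  convex_real Phi -> is_gradient ip Phi g ->
  forall u v, Phi v + ip (g v) (u - v) <= Phi u.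
Proof.
move=> Phi_cvx Phi_grad u v.
have [dv dPhi] := Phi_grad v.
have Dv := @deriveE _ _ _ _ _ (u - v) dv; rewrite dPhi in Dv.
rewrite -lerBrDl -Dv.
apply: (@cvgr_to_le _ (0:R)^'+ _ _
  (fun h : R => h^-1 *: ((Phi \o shift v) (h *: (u - v)) - Phi v))).
  exact/cvg_dnbhs_at_right/diff_derivable.
near=> h.
have h_gt0 : 0 < h by near: h; exact: nbhs_right_gt.
have h_lt1 : h < 1 by near: h; exact: nbhs_right_lt.
have := Phi_cvx u v h; rewrite (ltW h_gt0) (ltW h_lt1) => /(_ isT).
have -> : h *: u + (1 - h) *: v = h *: (u - v) + v.
  by rewrite scalerBl scale1r scalerBr -addrA [- (h *: v) + v]addrC.
move=> cvx_ineq /=.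
rewrite -(ler_pM2l h_gt0) [h * (_ *: _)]mulrA mulfV ?gt_eqF // mul1r; lra.
Unshelve. all: by end_near. Qed.

Lemma is_derive_along_line (Phi : V -> R) (g : V -> V) (y d : V) (t : R) :
  is_gradient ip Phi g ->
  is_derive t 1 (fun t : R => Phi (t *: d + y)) (ip (g (t *: d + y)) d).
Proof.
move=> Phi_grad; have [dv dPhi] := Phi_grad (t *: d + y).
have Dv := @deriveE _ _ _ _ _ d dv; rewrite dPhi in Dv.
have quotE : (fun h : R => h^-1 *:
      (((fun t0 : R => Phi (t0 *: d + y)) \o shift t) (h *: 1) - Phi (t *: d + y))) =
    (fun h : R => h^-1 *: ((Phi \o shift (t *: d + y)) (h *: d) - Phi (t *: d + y))).
  apply/funext => h /=; congr (_ *: (Phi _ - _)).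
  by rewrite [_%:A]mulr1 scalerDl addrA.
apply: DeriveDef; first by rewrite /derivable quotE; exact: diff_derivable.
by rewrite /derive quotE -Dv.
Qed.

(* Mean value theorem for
   [t |-> Phi (y + t d) - t <g y, d> - t^2 L |d|^2 / 2] on [0, 1]. *)
Lemma descent_lemma (Phi : V -> R) (g : V -> V) (L : R) :
  is_gradient ip Phi g -> (forall u v, `|g u - g v| <= L * `|u - v|) ->
  forall y d, Phi (d + y) <= Phi y + ip (g y) d + L / 2 * `|d| ^+ 2.
Proof.
move=> Phi_grad g_lip y d.
set c := ip (g y) d; set q := L / 2 * `|d| ^+ 2.
pose h : R -> R :=
  (fun t => Phi (t *: d + y)) - c \*: (@idfun R) - q \*: ((@idfun R) ^+ 2).
pose dh t := ip (g (t *: d + y)) d - c - q * (2 * t).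
have h_derive t : is_derive t (1:R) h (dh t).
  apply: is_derive_eq.
    by apply: is_deriveB; first apply: is_deriveB; exact: is_derive_along_line.
  rewrite /dh /GRing.scale /= !mulr1 expr1; ring.
have h_cont : {within `[0, 1], continuous h}.
  by apply: derivable_within_continuous => t _; case: (h_derive t).
have [t0 t0_in mvt] := MVT ltr01 (fun t _ => h_derive t) h_cont.
have t0_ge0 : 0 <= t0 by move: t0_in; rewrite in_itv /= => /andP[/ltW].
have dh_le0 : dh t0 <= 0.
  have := cauchy_schwarz (g (t0 *: d + y) - g y) d.
  have := g_lip (t0 *: d + y) y; rewrite addrK normrZ ger0_norm // => lip_t0.
  have : `|g (t0 *: d + y) - g y| * `|d| <= L * (t0 * `|d|) * `|d|.
    exact: ler_wpM2r.
  rewrite /dh /c /q ipBl expr2; lra.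
have : h 1 - h 0 <= 0 by rewrite mvt subr0 mulr1.
have -> : h 1 - h 0 = Phi (1 *: d + y) - c * 1 - q * 1 ^+ 2
                      - (Phi (0 *: d + y) - c * 0 - q * 0 ^+ 2) by [].
rewrite scale1r scale0r add0r expr1n expr0n /= mulr1 !mulr0; lra.
Qed.

(* Compare the prox objective at [X] and at [t u + (1 - t) X], with [t] so small
   that the quadratic term in [t] is at most [t e]. *)
Lemma prox_variational_le (s : R) (Psi : V -> \bar R) (w X u : V) (pX pu : R) :
  0 < s -> convex_ext Psi -> is_prox s Psi w X ->
  Psi X = pX%:E -> Psi u = pu%:E ->
  pX + ip (w - X) (u - X) / s <= pu.
Proof.
move=> s_gt0 Psi_cvx X_prox PX Pu.
apply/ler_addgt0Pr => e e_gt0.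
set N := `|u - X| ^+ 2.
have N_ge0 : 0 <= N by rewrite exprn_ge0.
have se_gt0 : 0 < s * e by rewrite mulr_gt0.
have den_gt0 : 0 < s * e + N + 1 by lra.
set t := s * e / (s * e + N + 1).
have t_gt0 : 0 < t by rewrite divr_gt0.
have t_lt1 : t < 1 by rewrite ltr_pdivrMr // mul1r; lra.
have tN_le : t * N <= s * e.
  rewrite /t mulrAC ler_pdivrMr //.
  have : 0 <= s * e * (e * s + 1) by rewrite mulr_ge0 // ?ltW //; nra.
  nra.
set ut := t *: u + (1 - t) *: X.
have cvx := Psi_cvx u X t (andb_true_intro (conj t_gt0 t_lt1)).
rewrite Pu PX -!EFinM -EFinD in cvx.
have := le_trans (X_prox ut) (leeD2r _ cvx).
rewrite /= PX -!EFinD lee_fin.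
have -> : ut - w = (X - w) + t *: (u - X).
  by rewrite /ut scalerBl scale1r scalerBr addrCA addrAC.
rewrite (sqr_normD (X - w)) sqr_normZ ipZr -[ip (w - X) _]opprK -ipNl opprB => opt.
have half_s : (2 * s)^-1 * 2 = s^-1.
  by rewrite invfM mulrAC mulVf ?mul1r // pnatr_eq0.
have quad_le : (2 * s)^-1 * (t ^+ 2 * N) <= t * e.
  have -> : (2 * s)^-1 * (t ^+ 2 * N) = t * (t * N) / (2 * s).
    by rewrite expr2; field; lra.
  rewrite ler_pdivrMr; last lra.
  have : t * (t * N) <= t * (s * e) by apply: ler_wpM2l; [exact: ltW|].
  nra.
rewrite -(ler_pM2l t_gt0) -half_s.
move: opt quad_le; rewrite /N.
set a := (2 * s)^-1; set b := ip (X - w) (u - X).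
set c := `|X - w| ^+ 2; set d := `|u - X| ^+ 2; lra.
Qed.

Lemma forward_backward_le (s L : R) (Psi : V -> \bar R) (Phi : V -> R)
    (g : V -> V) (y X u : V) (pX pu : R) :
  0 < s -> s < L^-1 -> convex_ext Psi -> convex_real Phi ->
  is_gradient ip Phi g -> (forall u v, `|g u - g v| <= L * `|u - v|) ->
  is_prox s Psi (y - s *: g y) X -> Psi X = pX%:E -> Psi u = pu%:E ->
  pX + Phi X + ip (y - X) (u - X) / s - `|X - y| ^+ 2 / (2 * s) <= pu + Phi u.
Proof.
move=> s_gt0 sL Psi_cvx Phi_cvx Phi_grad g_lip X_prox PX Pu.
have L_gt0 : 0 < L by rewrite -invr_gt0; exact: lt_trans sL.
have prox_ineq := prox_variational_le s_gt0 Psi_cvx X_prox PX Pu.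
have first_order := convex_first_order_le Phi_cvx Phi_grad u y.
have descent := descent_lemma Phi_grad g_lip y (X - y); rewrite subrK in descent.
rewrite addrAC ipBl ipZl mulrBl mulrAC mulfV ?gt_eqF // mul1r in prox_ineq.
have split_uX : ip (g y) (u - X) = ip (g y) (u - y) - ip (g y) (X - y).
  by rewrite -ipBr opprB addrA subrK.
rewrite split_uX in prox_ineq.
have sL1 : s * L < 1 by rewrite -ltr_pdivlMr // mul1r.
have L_le : L / 2 * `|X - y| ^+ 2 <= `|X - y| ^+ 2 / (2 * s).
  rewrite ler_pdivlMr; last lra.
  have := sqr_ge0 `|X - y|; nra.
lra.
Qed.

(* With [lam = (a - 1) / (K + a - 1)] and [M = 2 s (K + a - 1)^2 / (a - 1)], the
   difference of the two sides is [M (1 - lam)] times the slack of the first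
   hypothesis, plus [M lam] times that of the second, plus
   [2 s (a - 2)^2 / (a - 1) (T0 - Ts)]. *)
Lemma inertial_energy_decrease (a s K T0 T1 Ts : R) (xm xk x1 q : V) :
  3 < a -> 0 < s -> 1 <= K -> Ts <= T0 ->
  let y := xk + ((K - 1) / (K + a - 1)) *: (xk - xm) in
  T1 + ip (y - x1) (xk - x1) / s - `|x1 - y| ^+ 2 / (2 * s) <= T0 ->
  T1 + ip (y - x1) (q - x1) / s - `|x1 - y| ^+ 2 / (2 * s) <= Ts ->
  2 * s / (a - 1) * (K + 1 + a - 2) ^+ 2 * (T1 - Ts)
    + (a - 1) * `|x1 + (K / (a - 1)) *: (x1 - xk) - q| ^+ 2
    + 2 * s * (a - 3) / (a - 1) * K * (T0 - Ts)
  <= 2 * s / (a - 1) * (K + a - 2) ^+ 2 * (T0 - Ts)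
    + (a - 1) * `|xk + ((K - 1) / (a - 1)) *: (xk - xm) - q| ^+ 2.
Proof.
move=> a_gt3 s_gt0 K_ge1 Ts_le y fb_xk fb_q.
set M := 2 * s / (a - 1) * (K + a - 1) ^+ 2.
set lam := (a - 1) / (K + a - 1).
have lam_ge0 : 0 <= lam by apply: divr_ge0; lra.
have lam_le1 : 0 <= 1 - lam by rewrite subr_ge0 /lam ler_pdivrMr ?mul1r; lra.
have M_ge0 : 0 <= M.
  by apply: mulr_ge0; [apply: divr_ge0|apply: sqr_ge0]; lra.
have S1 : 0 <= M * (1 - lam) *
    (T0 - (T1 + ip (y - x1) (xk - x1) / s - `|x1 - y| ^+ 2 / (2 * s))).
  by apply: mulr_ge0; [apply: mulr_ge0|lra].
have S2 : 0 <= M * lam *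
    (Ts - (T1 + ip (y - x1) (q - x1) / s - `|x1 - y| ^+ 2 / (2 * s))).
  by apply: mulr_ge0; [apply: mulr_ge0|lra].
have S3 : 0 <= 2 * s / (a - 1) * (a - 2) ^+ 2 * (T0 - Ts).
  by apply: mulr_ge0; [apply: mulr_ge0; [apply: divr_ge0|apply: sqr_ge0]|]; lra.
move: S1 S2 S3; rewrite /M /lam /y -!ip_self !ip_linE.
rewrite ?[ip xk xm]ipC ?[ip x1 xm]ipC ?[ip q xm]ipC ?[ip x1 xk]ipC ?[ip q xk]ipC
  ?[ip q x1]ipC.
move=> S1 S2 S3.
have Ka_neq0 : K + a - 1 != 0 by apply/eqP; lra.
have a1_neq0 : a - 1 != 0 by apply/eqP; lra.
have s_neq0 : s != 0 by apply/eqP; lra.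
rewrite -subr_ge0.
lazymatch type of S1 with is_true (Order.le _ ?A) =>
lazymatch type of S2 with is_true (Order.le _ ?B) =>
lazymatch type of S3 with is_true (Order.le _ ?C) =>
lazymatch goal with |- is_true (Order.le _ ?G) =>
  have -> : G = A + B + C by field; rewrite a1_neq0 s_neq0 Ka_neq0 end end end end.
by rewrite !addr_ge0.
Qed.

End InnerProduct.

Lemma telescoping_sum_le (R : realType) (c : R) (f En : nat -> R) : 0 < c ->
  (forall k, 0 <= En k.+1) ->
  (forall k, (1 <= k)%N -> En k.+1 + c * f k <= En k) ->
  forall n, \sum_(1 <= k < n) f k <= En 1%N / c.
Proof.
move=> c_gt0 En_ge0 En_step.
have partial n : c * \sum_(1 <= k < n.+1) f k + En n.+1 <= En 1%N.
  elim: n => [|n IH]; first by rewrite big_geq // mulr0 add0r.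
  rewrite big_nat_recr //= mulrDr.
  have := En_step n.+1 isT; lra.
case=> [|n]; first by rewrite big_geq // divr_ge0 ?(En_ge0 0%N) ?ltW.
rewrite ler_pdivlMr // mulrC.
have := partial n; have := En_ge0 n; lra.
Qed.

Lemma fin_num_of_leeD (R : realType) (p q : \bar R) (r r' : R) :
  p != -oo%E -> q \is a fin_num -> (p + r%:E <= q + r'%:E)%E -> p \is a fin_num.
Proof.
move=> p_ninfty q_fin; rewrite fin_numE p_ninfty /=; apply: contraTN => /eqP ->.
by rewrite addye // -(fineK q_fin) -EFinD leye_eq.
Qed.

Section InertialForwardBackward.
Variables (R : realType) (V : normedModType R) (ip : V -> V -> R).
Variables (Psi : V -> \bar R) (Phi : V -> R) (g : V -> V) (L alpha s : R).
Variables (x : nat -> V) (xstar : V).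
Hypotheses (ip_inner : is_inner_product ip) (Psi_proper : proper_fun Psi)
  (Psi_cvx : convex_ext Psi) (Phi_cvx : convex_real Phi)
  (Phi_grad : is_gradient ip Phi g)
  (g_lip : forall u v, `|g u - g v| <= L * `|u - v|)
  (alpha_gt3 : 3 < alpha) (s_gt0 : 0 < s) (s_lt : s < L^-1).
Hypothesis x_prox : forall k : nat, (1 <= k)%N ->
  let y := x k + ((k%:R - 1) / (k%:R + alpha - 1)) *: (x k - x k.-1) in
  is_prox s Psi (y - s *: g y) (x k.+1).
Hypothesis xstar_min : is_argmin (fun u => (Psi u + (Phi u)%:E)%E) xstar.

(* [lra] ignores section hypotheses, hence the [move: alpha_gt3 s_gt0] before it. *)
Local Notation Theta u := (Psi u + (Phi u)%:E)%E.
Local Notation z k := (x k + ((k%:R - 1) / (alpha - 1)) *: (x k - x k.-1)).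
Local Notation E k := (((2 * s / (alpha - 1) * (k%:R + alpha - 2) ^+ 2)%:E
  * (Theta (x k) - Theta xstar) + ((alpha - 1) * `|z k - xstar| ^+ 2)%:E)%E).

Lemma Psi_xstar_fin : Psi xstar \is a fin_num.
Proof.
have [Psi_ninfty [u Psi_u]] := Psi_proper.
apply: (fin_num_of_leeD (r := Phi xstar) (r' := Phi u) _ _ (xstar_min u)) => //.
by rewrite fin_numE Psi_ninfty.
Qed.

Lemma Psi_iterate_fin k : (1 <= k)%N ->
  Psi (x 1%N) \is a fin_num -> Psi (x k) \is a fin_num.
Proof.
case: k => [|[|k]] // _ _.
have [Psi_ninfty _] := Psi_proper.
exact: fin_num_of_leeD (Psi_ninfty _) Psi_xstar_fin (x_prox (isT : (0 < k.+1)%N) xstar).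
Qed.

Lemma weighted_gap_ge0 k : (0 <= k%:R%:E * (Theta (x k) - Theta xstar))%E.
Proof.
apply: mule_ge0; first by rewrite lee_fin.
rewrite sube_ge0 ?xstar_min //.
by rewrite fin_numD Psi_xstar_fin.
Qed.

Lemma energy1_infty : ~~ (Psi (x 1%N) \is a fin_num) -> E 1%N = +oo%E.
Proof.
have [Psi_ninfty _] := Psi_proper.
rewrite fin_numE Psi_ninfty /= negbK => /eqP ->.
rewrite addye; last by rewrite -(fineK Psi_xstar_fin) -EFinD -EFinN.
rewrite gt0_muley ?addye // lte_fin.
rewrite mulr1n; apply: mulr_gt0; [apply: divr_gt0|apply: exprn_gt0].
all: move: alpha_gt3 s_gt0; lra.
Qed.

Section FiniteStart.
Hypothesis Psi_x1_fin : Psi (x 1%N) \is a fin_num.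

Let Theta_r u := fine (Psi u) + Phi u.
Let gap k := Theta_r (x k) - Theta_r xstar.
Let energy k := 2 * s / (alpha - 1) * (k%:R + alpha - 2) ^+ 2 * gap k
  + (alpha - 1) * `|z k - xstar| ^+ 2.

Lemma Psi_iterateE k : (1 <= k)%N -> Psi (x k) = (fine (Psi (x k)))%:E.
Proof. by move=> k_ge1; rewrite fineK // Psi_iterate_fin. Qed.

Lemma ThetaB_gap k : (1 <= k)%N -> (Theta (x k) - Theta xstar)%E = (gap k)%:E.
Proof.
by move=> k_ge1; rewrite Psi_iterateE // -(fineK Psi_xstar_fin) -!EFinD.
Qed.

Lemma gap_ge0 k : (1 <= k)%N -> 0 <= gap k.
Proof.
move=> k_ge1; have := xstar_min (x k).
by rewrite Psi_iterateE // -(fineK Psi_xstar_fin) -!EFinD lee_fin subr_ge0.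
Qed.

Lemma energyE k : (1 <= k)%N -> E k = (energy k)%:E.
Proof. by move=> k_ge1; rewrite ThetaB_gap // -EFinM -EFinD. Qed.

Lemma energy_ge0 k : (1 <= k)%N -> 0 <= energy k.
Proof.
move=> k_ge1; apply: addr_ge0; apply: mulr_ge0; rewrite ?sqr_ge0 ?gap_ge0 //.
  by apply: mulr_ge0; rewrite ?sqr_ge0 // divr_ge0 //; move: alpha_gt3 s_gt0; lra.
move: alpha_gt3; lra.
Qed.

Lemma energy_decrease k : (1 <= k)%N ->
  energy k.+1 + 2 * s * (alpha - 3) / (alpha - 1) * (k%:R * gap k) <= energy k.
Proof.
move=> k_ge1.
have prox_k := x_prox k_ge1; cbv zeta in prox_k.
have Psi_k1 := Psi_iterateE (isT : (1 <= k.+1)%N).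
have Psi_star : Psi xstar = (fine (Psi xstar))%:E by rewrite fineK ?Psi_xstar_fin.
have fb_k := forward_backward_le ip_inner s_gt0 s_lt Psi_cvx Phi_cvx Phi_grad g_lip
  prox_k Psi_k1 (Psi_iterateE k_ge1).
have fb_star := forward_backward_le ip_inner s_gt0 s_lt Psi_cvx Phi_cvx Phi_grad g_lip
  prox_k Psi_k1 Psi_star.
have K_ge1 : 1 <= k%:R :> R by rewrite ler1n.
have Ts_le : Theta_r xstar <= Theta_r (x k).
  by have := gap_ge0 k_ge1; rewrite subr_ge0.
have := inertial_energy_decrease ip_inner alpha_gt3 s_gt0 K_ge1 Ts_le fb_k fb_star.
rewrite /energy /gap /Theta_r -!natr1 addrK; lra.
Qed.

Lemma weighted_gap_partial_sum_le n :
  (\sum_(1 <= k < n) (k%:R%:E * (Theta (x k) - Theta xstar))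
    <= ((alpha - 1) / (2 * s * (alpha - 3)))%:E * E 1%N)%E.
Proof.
have c_gt0 : 0 < 2 * s * (alpha - 3) / (alpha - 1).
  by apply: divr_gt0; [apply: mulr_gt0|]; move: alpha_gt3 s_gt0; lra.
rewrite (@eq_big_nat _ _ _ 1 n _ (fun k => (k%:R * gap k)%:E)); last first.
  by move=> k /andP[k_ge1 _]; rewrite ThetaB_gap // -EFinM.
rewrite sumEFin energyE // -EFinM lee_fin mulrC -invf_div.
apply: telescoping_sum_le c_gt0 _ _ n; first by move=> k; apply: energy_ge0.
exact: energy_decrease.
Qed.

End FiniteStart.
End InertialForwardBackward.

Theorem fact3 (R : realType) (V : completeNormedModType R)
  (ip : V -> V -> R) (Psi : V -> \bar R) (Phi : V -> R) (gradPhi : V -> V)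
  (L alpha s : R) (x : nat -> V) (xstar : V) :
  is_inner_product ip ->
  proper_fun Psi -> lower_semicontinuous Psi -> convex_ext Psi ->
  convex_real Phi -> is_gradient ip Phi gradPhi -> continuous gradPhi ->
  0 < L -> (forall u v, `|gradPhi u - gradPhi v| <= L * `|u - v|) ->
  3 < alpha -> 0 < s -> s < L^-1 ->
  (forall k : nat, (1 <= k)%N ->
     let y := x k + ((k%:R - 1) / (k%:R + alpha - 1)) *: (x k - x k.-1) in
     is_prox s Psi (y - s *: gradPhi y) (x k.+1)) ->
  is_argmin (fun u => (Psi u + (Phi u)%:E)%E) xstar ->
  let Theta := fun u => (Psi u + (Phi u)%:E)%E in
  let z := fun k : nat => x k + ((k%:R - 1) / (alpha - 1)) *: (x k - x k.-1) in
  let E := fun k : nat =>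
    ((2 * s / (alpha - 1) * (k%:R + alpha - 2) ^+ 2)%:E
       * (Theta (x k) - Theta xstar)
     + ((alpha - 1) * `|z k - xstar| ^+ 2)%:E)%E in
  (\sum_(1 <= k <oo) (k%:R%:E * (Theta (x k) - Theta xstar))
     <= ((alpha - 1) / (2 * s * (alpha - 3)))%:E * E 1%N)%E.
Proof.
move=> ip_inner Psi_proper _ Psi_cvx Phi_cvx Phi_grad _ _ g_lip alpha_gt3 s_gt0
  s_lt x_prox xstar_min; cbv zeta.
have [Psi_x1_fin|Psi_x1_nfin] := boolP (Psi (x 1%N) \is a fin_num).
  apply: lime_le.
    by apply: (@is_cvg_nneseries _ _ xpredT) => k _ _; exact: (weighted_gap_ge0 _ Psi_proper xstar_min).
  exact/nearW/(weighted_gap_partial_sum_le ip_inner Psi_proper Psi_cvx Phi_cvx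
    Phi_grad g_lip alpha_gt3 s_gt0 s_lt x_prox xstar_min Psi_x1_fin).
rewrite (energy1_infty Psi_proper alpha_gt3 s_gt0 xstar_min Psi_x1_nfin).
by rewrite gt0_muley ?leey // lte_fin divr_gt0 ?mulr_gt0 // ?subr_gt0 //; lra.
Qed.
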